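(* Let $\mathcal{G}=(\mathcal{V},\mathcal{A})$ be the information-flow graph of a single-sender single-uniprior index-coding instance with message lengths $q_1,\dots,q_n$. Then \[ \ell^*(\mathcal{G}) \geq \max_{\mathcal{G}'=(\mathcal{V},\mathcal{A}'):\ \mathcal{A}'\subseteq\mathcal{A}} \ \sum_{i:\ i \text{ is a predecessor of some vertex in } \mathcal{L}(\mathcal{G}')} q_i . \]
   Context: Single-sender single-uniprior index coding: there are $n$ receivers and $n$ independent messages $x_1,\dots,x_n$; message $x_i$ consists of $q_i\ge 1$ bits, each independently uniformly distributed on $\{0,1\}$. A single sender knows all messages. Receiver $i$ knows $x_i$ a priori and requests a set $\mathcal{W}_i$ of messages with $x_i\notin\mathcal{W}_i$. The information-flow graph is the directed graph $\mathcal{G}=(\mathcal{V},\mathcal{A})$ with $\mathcal{V}=\{1,\dots,n\}$ and an arc $(j\to i)\in\mathcal{A}$ iff $x_j\in\mathcal{W}_i$. An index code of length $\ell$ consists of an encoding function $E:\{0,1\}^{\sum_i q_i}\to\{0,1\}^\ell$ and, for each receiver $i$, a decoding function $D_i$ such that $D_i(E(x_1,\dots,x_n),x_i)$ equals the tuple of messages in $\mathcal{W}_i$ for all values of the messages. $\ell^*(\mathcal{G})$ denotes the minimum length of an index code. For a directed graph $\mathcal{H}$, a leaf vertex is a vertex with no outgoing arcs and $\mathcal{L}(\mathcal{H})$ is the set of leaf vertices of $\mathcal{H}$. A vertex $j$ is a predecessor of vertex $i$ in $\mathcal{H}$ iff there is a directed path in $\mathcal{H}$ from $j$ to $i$. 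*)

From mathcomp Require Import all_boot.
Set Implicit Arguments. Unset Strict Implicit. Unset Printing Implicit Defensive.

(* Vertices are 'I_n; message x_i is a (q i)-bit string; the information-flow
   graph is given by its arc relation A : rel 'I_n, with A j i meaning
   (j -> i) is an arc, i.e. receiver i requests x_j. *)

Definition msgs (n : nat) (q : 'I_n -> nat) := forall i : 'I_n, (q i).-tuple bool.

Definition is_index_code (n : nat) (q : 'I_n -> nat) (A : rel 'I_n) (l : nat)
  (E : msgs q -> l.-tuple bool)
  (D : forall i : 'I_n, l.-tuple bool -> (q i).-tuple bool ->
         forall j : 'I_n, A j i -> (q j).-tuple bool) : Prop :=
  forall (x : msgs q) (i j : 'I_n) (hji : A j i), D i (E x) (x i) j hji = x j.

Definition has_index_code (n : nat) (q : 'I_n -> nat) (A : rel 'I_n) (l : nat) : Prop :=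
  exists E D, @is_index_code n q A l E D.

(* ell_star(G) >= b  is expressed as: every index code for G has length >= b. *)

Definition is_leaf (n : nat) (A' : rel 'I_n) (i : 'I_n) : bool :=
  [forall k, ~~ A' i k].

Definition is_pred (n : nat) (A' : rel 'I_n) (j i : 'I_n) : bool :=
  [exists k, A' j k && connect A' k i].

Definition pred_of_leaves (n : nat) (A' : rel 'I_n) : {set 'I_n} :=
  [set j | [exists i, is_leaf A' i && is_pred A' j i]].

(* Only the messages of predecessors of leaves of a subgraph A' matter.
   Fix the other messages. A leaf of A' is not such a predecessor, so its
   message is fixed too; and whenever receiver i knows x_i it decodes every
   x_j with (j -> i) in A' from the codeword. Walking backwards along the paths
   of A' that end at leaves, the codeword therefore determines every message
   of a predecessor of a leaf. Hence the encoder is injective on a family of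
   2^(sum of their q_j) message tuples, which forces l to be at least that sum. *)
From mathcomp Require Import all_boot.
Set Implicit Arguments. Unset Strict Implicit. Unset Printing Implicit Defensive.

Lemma leaf_notin_pred_of_leaves (n : nat) (A' : rel 'I_n) (i : 'I_n) :
  is_leaf A' i -> i \notin pred_of_leaves A'.
Proof.
move=> /forallP leaf_i; rewrite inE; apply/existsP => -[i' /andP[_]].
by case/existsP => k /andP[ik _]; move: (leaf_i k); rewrite ik.
Qed.

Section IndexCodeDecoding.

Variables (n : nat) (q : 'I_n -> nat) (A : rel 'I_n) (l : nat).
Variables (E : msgs q -> l.-tuple bool)
  (D : forall i : 'I_n, l.-tuple bool -> (q i).-tuple bool ->
         forall j : 'I_n, A j i -> (q j).-tuple bool).
Hypothesis code : is_index_code E D.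
Variables (x y : msgs q).
Hypothesis Exy : E x = E y.

Lemma index_code_decode_eq (j i : 'I_n) : A j i -> x i = y i -> x j = y j.
Proof. by move=> ji xyi; rewrite -(code x ji) -(code y ji) Exy xyi. Qed.

Lemma index_code_connect_eq (A' : rel 'I_n) (k i : 'I_n) :
  subrel A' A -> connect A' k i -> x i = y i -> x k = y k.
Proof.
move=> sA'A /connectP[p]; elim: p k => [|k' p IHp] k /=; first by move=> _ ->.
case/andP=> kk' path_k'p last_i xyi.
by apply: (index_code_decode_eq (sA'A _ _ kk')); apply: IHp.
Qed.

Lemma index_code_eq_off_pred_of_leaves (A' : rel 'I_n) :
  subrel A' A -> (forall j, j \notin pred_of_leaves A' -> x j = y j) ->
  forall j, x j = y j.
Proof.
move=> sA'A xy_off j; have [Pj | /xy_off //] := boolP (j \in pred_of_leaves A').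
move: Pj; rewrite inE => /existsP[i /andP[leaf_i /existsP[k /andP[jk ki]]]].
apply: (index_code_decode_eq (sA'A _ _ jk)).
by apply: (index_code_connect_eq sA'A ki); apply/xy_off/leaf_notin_pred_of_leaves.
Qed.

End IndexCodeDecoding.

Section MessagesOfBits.

Variables (n : nat) (q : 'I_n -> nat).

Definition msg_bit := {j : 'I_n & 'I_(q j)}.

Definition msgs_of_bits (f : {ffun msg_bit -> bool}) : msgs q :=
  fun j => [tuple f (Tagged (fun j => 'I_(q j)) k) | k < q j].

Lemma msgs_of_bits_inj (f g : {ffun msg_bit -> bool}) :
  (forall j, msgs_of_bits f j = msgs_of_bits g j) -> f = g.
Proof.
move=> fg; apply/ffunP => -[j k].
by move: (congr1 (fun t => tnth t k) (fg j)); rewrite !tnth_mktuple.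
Qed.

Lemma card_msg_bits_in (P : {set 'I_n}) :
  #|[pred b : msg_bit | tag b \in P]| = \sum_(j in P) q j.
Proof.
rewrite -sum1_card -(eq_bigl _ _ (fun b => andbT (tag b \in P))).
rewrite -(sig_big_dep (mem P) (fun j (_ : 'I_(q j)) => true) (fun _ _ => 1)).
by apply: eq_bigr => j _; rewrite sum1_card card_ord.
Qed.

End MessagesOfBits.

Theorem lemma5 (n : nat) (q : 'I_n -> nat) (A : rel 'I_n)
  (hq : forall i, 0 < q i)
  (hirr : forall i, ~~ A i i)
  (A' : rel 'I_n) (hsub : forall j i, A' j i -> A j i)
  (l : nat) (hcode : has_index_code q A l) :
  \sum_(j in pred_of_leaves A') q j <= l.
Proof.
case: hcode => E [D code].
set P := pred_of_leaves A'.
pose free_bits := pffun_on false [pred b : msg_bit q | tag b \in P] predT.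
have inj : {in free_bits &, injective (fun f => E (msgs_of_bits f))}.
  move=> f g /pffun_onP[/supportP f_off _] /pffun_onP[/supportP g_off _] Efg.
  apply/msgs_of_bits_inj/(index_code_eq_off_pred_of_leaves code Efg hsub) => j Pj.
  by apply: eq_mktuple => k; rewrite f_off ?g_off.
have := @leq_card_in _ _ _ free_bits inj.
by rewrite card_pffun_on card_msg_bits_in card_tuple card_bool leq_exp2l.
Qed.
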